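(* Let an instance of MWSBP be given, let $O_1,\ldots,O_q$ be the bins of an optimal solution, and let $B_1,\ldots,B_p$ be the bins output by the Knapsack-Batching algorithm on this instance. Set $B_j:=\emptyset$ for $j\ge p+1$ and $O_j:=\emptyset$ for $j\ge q+1$. Let $\alpha\ge 1$. If for all $k\in\{1,\ldots,q\}$ \[ w(B_1)+w(B_2)+\cdots+w(B_{\lfloor \alpha k\rfloor}) \;\ge\; w(O_1)+w(O_2)+\cdots+w(O_k), \] then $\Phi(B_1,\ldots,B_p)\le \alpha\cdot \Phi(O_1,\ldots,O_q)$, i.e. $\mathtt{KB}\le \alpha\cdot \mathtt{OPT}$.
   Context: Min-Weighted Sum Bin Packing (MWSBP): an instance consists of $n$ items with sizes $s_i\in(0,1]$ and weights $w_i>0$, $i\in[n]=\{1,\ldots,n\}$. For a vector $x\in\mathbb{R}^n$ and $S\subseteq[n]$ write $x(S)=\sum_{i\in S}x_i$. A feasible solution is a partition of $[n]$ into bins $B_1,\ldots,B_p$ with $s(B_k)\le 1$ for all $k$; its cost is $\Phi(B_1,\ldots,B_p)=\sum_{k=1}^p k\, w(B_k)$. $\mathtt{OPT}$ denotes the minimum cost. The Knapsack-Batching algorithm ($\mathtt{KB}$): for $k=1,2,\ldots$ while items remain, let $B_k$ be a subset of the remaining items $[n]\setminus(B_1\cup\cdots\cup B_{k-1})$ of maximum total weight $w(B_k)$ subject to $s(B_k)\le 1$ (ties broken arbitrarily). $\mathtt{KB}$ also denotes the cost of its output. *)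

From HB Require Import structures.
From mathcomp Require Import all_boot all_order all_algebra.
From mathcomp Require Import reals.
Set Implicit Arguments. Unset Strict Implicit. Unset Printing Implicit Defensive.
Import Order.TTheory GRing.Theory Num.Theory.
Local Open Scope ring_scope.

(* Items are the elements of 'I_n; a solution is a sequence of bins
   (bin number k+1 is the k-th entry, 0-based). *)

Definition wsum (R : realType) (n : nat) (x : 'I_n -> R) (S : {set 'I_n}) : R :=
  \sum_(i in S) x i.

Definition bin (n : nat) (bs : seq {set 'I_n}) (j : nat) : {set 'I_n} :=
  nth set0 bs j.

Definition feasible (R : realType) (n : nat) (s : 'I_n -> R)
    (bs : seq {set 'I_n}) : Prop :=
  (forall j, (j < size bs)%N -> bin bs j != set0) /\
  (forall j k, (j < size bs)%N -> (k < size bs)%N -> j <> k ->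
     [disjoint bin bs j & bin bs k]) /\
  (forall i : 'I_n, exists2 j, (j < size bs)%N & i \in bin bs j) /\
  (forall j, (j < size bs)%N -> wsum s (bin bs j) <= 1).

Definition cost (R : realType) (n : nat) (w : 'I_n -> R)
    (bs : seq {set 'I_n}) : R :=
  \sum_(k < size bs) (k.+1)%:R * wsum w (bin bs k).

Definition optimal (R : realType) (n : nat) (s w : 'I_n -> R)
    (bs : seq {set 'I_n}) : Prop :=
  feasible s bs /\ forall bs', feasible s bs' -> cost w bs <= cost w bs'.

Definition remaining (n : nat) (bs : seq {set 'I_n}) (k : nat) : {set 'I_n} :=
  ~: (\bigcup_(j < k) bin bs j).

(* bs is a possible output of Knapsack-Batching (ties broken arbitrarily):
   at each step items remain and B_k is a max-weight subset of the remaining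
   items of total size <= 1; the loop stops once no items remain. *)
Definition KB_output (R : realType) (n : nat) (s w : 'I_n -> R)
    (bs : seq {set 'I_n}) : Prop :=
  (forall k, (k < size bs)%N ->
     [/\ remaining bs k != set0,
         bin bs k \subset remaining bs k,
         wsum s (bin bs k) <= 1 &
         forall S : {set 'I_n}, S \subset remaining bs k ->
           wsum s S <= 1 -> wsum w S <= wsum w (bin bs k)]) /\
  remaining bs (size bs) = set0.

(* Write b_j = w(B_{j+1}) and o_k = w(O_{k+1}) (0-based), and
   f(k) = floor(alpha k).  The proof is a "layer cake" argument:
   - a weighted sum  sum_j min(T, m_j) c_j  is the sum over the layers
     t < T of the partial sums  sum_{j : t < m_j} c_j;
   - for the KB solution (m_j = j+1) layer t carries  sum_j b_j - sum_{j<t} b_j;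
   - for the optimum, weighted by m_k = f(k+1), layer t carries at least
     sum_k o_k - sum_{k : f(k+1) <= t} o_k; since f is nondecreasing the
     last sum runs over a prefix of the bins, so by hypothesis it is at most
     sum_{j<t} b_j;
   - the KB bins are pairwise disjoint and the optimal bins partition [n],
     hence sum_j b_j <= w([n]) = sum_k o_k.
   Comparing layer by layer gives  cost(B) <= sum_k f(k+1) o_k, and
   f(k+1) <= alpha (k+1) yields the claim. *)

From HB Require Import structures.
From mathcomp Require Import all_boot all_order all_algebra.
From mathcomp Require Import reals.
Import Order.TTheory GRing.Theory Num.Theory.
Local Open Scope ring_scope.

Lemma sum_layers_below {R : numDomainType} (T m : nat) (c : R) :
  \sum_(t < T) (if (t < m)%N then c else 0) = (minn T m)%:R * c.
Proof.
elim: T => [|T IH]; first by rewrite big_ord0 min0n mul0r.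
rewrite big_ord_recr /= IH; case: ltnP => hTm.
- by rewrite (minn_idPl hTm) -natr1 mulrDl mul1r.
- by rewrite (minn_idPr (leqW hTm)) addr0.
Qed.

Lemma weighted_sum_layers {R : numDomainType} (N T : nat)
    (m : nat -> nat) (c : nat -> R) :
  \sum_(j < N) (minn T (m j))%:R * c j
    = \sum_(t < T) \sum_(j < N) (if (t < m j)%N then c j else 0).
Proof.
rewrite exchange_big /=; apply: eq_bigr => j _.
by rewrite sum_layers_below.
Qed.

Lemma sum_if_compl {R : numDomainType} {N : nat} (P : pred nat)
    (c : nat -> R) :
  \sum_(j < N) (if P j then c j else 0)
    = \sum_(j < N) c j - \sum_(j < N) (if P j then 0 else c j).
Proof.
apply/eqP; rewrite eq_sym subr_eq -big_split /=; apply/eqP.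
by apply: eq_bigr => j _; case: (P j); rewrite ?addr0 ?add0r.
Qed.

Section LayerComparison.
Context {R : numDomainType} (b o : nat -> R) {f : nat -> nat} {T K : nat}.
Hypothesis b_ge0 : forall j, 0 <= b j.
Hypothesis o_ge0 : forall k, 0 <= o k.
Hypothesis f_mono : {homo f : k1 k2 / (k1 <= k2)%N}.
Hypothesis prefix_dominated : forall k : nat, (1 <= k <= K)%N ->
  \sum_(j < k) o j <= \sum_(j < f k) b j.
Hypothesis total_weight : \sum_(j < T) b j <= \sum_(k < K) o k.

Lemma partial_sum_mono (t1 t2 : nat) : (t1 <= t2)%N ->
  \sum_(j < t1) b j <= \sum_(j < t2) b j.
Proof.
move=> le12; rewrite (big_ord_widen t2 b le12) big_mkcond [leRHS]big_mkcond /=.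
by apply: ler_sum => j _; case: ifP => _; rewrite ?b_ge0.
Qed.

(* The optimal bins completed by layer t form a prefix, whose weight is
   covered by the first t KB bins. *)
Lemma completed_prefix_le (t K' : nat) : (K' <= K)%N ->
  \sum_(k < K') (if (f k.+1 <= t)%N then o k else 0) <= \sum_(j < t) b j.
Proof.
elim: K' => [|K' IH] hK'.
  by rewrite big_ord0; apply: sumr_ge0.
rewrite big_ord_recr /=; case: ifP => hf; last by rewrite addr0; apply/IH/ltnW.
have all_done : \sum_(k < K') (if (f k.+1 <= t)%N then o k else 0)
    = \sum_(k < K') o k.
  by apply: eq_bigr => k _; rewrite (leq_trans (f_mono _ _ (leqW (ltn_ord k))) hf).
rewrite all_done -(big_ord_recr K' o) /=.
exact: le_trans (prefix_dominated K'.+1 hK') (partial_sum_mono _ _ hf).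
Qed.

Lemma layer_le (t : nat) : (t <= T)%N ->
  \sum_(j < T) (if (t < j.+1)%N then b j else 0)
    <= \sum_(k < K) (if (t < f k.+1)%N then o k else 0).
Proof.
move=> htT; rewrite (sum_if_compl (fun j => (t < j.+1)%N)).
rewrite (sum_if_compl (fun k => (t < f k.+1)%N)); apply: lerB => //.
have -> : \sum_(j < T) (if (t < j.+1)%N then 0 else b j) = \sum_(j < t) b j.
  rewrite (big_ord_widen T b htT) [RHS]big_mkcond /=.
  by apply: eq_bigr => j _; rewrite ltnS leqNgt; case: (j < t)%N.
under eq_bigr do rewrite ltnNge if_neg.
exact: completed_prefix_le.
Qed.

Lemma rank_weighted_le :
  \sum_(j < T) j.+1%:R * b j <= \sum_(k < K) (f k.+1)%:R * o k.
Proof.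
have trunc_b : \sum_(j < T) j.+1%:R * b j
    = \sum_(j < T) (minn T (nat_of_ord j).+1)%:R * b j.
  by apply: eq_bigr => j _; rewrite (minn_idPr (ltn_ord j)).
rewrite trunc_b (weighted_sum_layers T T (fun j => j.+1)).
apply: le_trans (_ : _ <= \sum_(k < K) (minn T (f k.+1))%:R * o k) _.
  rewrite (weighted_sum_layers K T (fun k => f k.+1)).
  by apply: ler_sum => t _; apply: layer_le; apply: ltnW.
apply: ler_sum => k _; apply: ler_wpM2r => //.
by rewrite ler_nat geq_minr.
Qed.

End LayerComparison.

Lemma wsum_ge0 {R : realType} {n : nat} (w : 'I_n -> R) (S : {set 'I_n}) :
  (forall i, 0 < w i) -> 0 <= wsum w S.
Proof. by move=> hw; apply: sumr_ge0 => i _; apply: ltW. Qed.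

Lemma wsum_bigcup {R : realType} {n : nat} (w : 'I_n -> R)
    (F : nat -> {set 'I_n}) (m : nat) :
  (forall k, (k < m)%N -> [disjoint F k & \bigcup_(j < k) F j]) ->
  \sum_(j < m) wsum w (F j) = wsum w (\bigcup_(j < m) F j).
Proof.
elim: m => [|m IH] hdisj; first by rewrite !big_ord0 /wsum big_set0.
rewrite big_ord_recr /= IH => [|k hk]; last exact/hdisj/ltnW.
have hd : [disjoint \bigcup_(j < m) F j & F m] by rewrite disjoint_sym hdisj.
rewrite big_ord_recr /= /wsum -(bigU _ _ _ hd).
by apply: eq_bigl => i; rewrite !inE.
Qed.

Lemma KB_total_weight {R : realType} {n : nat} {s : 'I_n -> R}
    (w : 'I_n -> R) {Bs : seq {set 'I_n}} :
  (forall i, 0 < w i) -> KB_output s w Bs ->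
  \sum_(j < size Bs) wsum w (bin Bs j) <= wsum w setT.
Proof.
move=> hw [KB _]; rewrite wsum_bigcup => [|k hk]; last first.
  have [_ hsub _ _] := KB k hk.
  by move: hsub; rewrite /remaining subsets_disjoint setCK.
rewrite /wsum [leRHS](big_setID (\bigcup_(j < size Bs) bin Bs j)) /=.
by rewrite setTI lerDl; apply: sumr_ge0 => i _; apply: ltW.
Qed.

Lemma feasible_total_weight {R : realType} {n : nat} {s : 'I_n -> R}
    (w : 'I_n -> R) {Os : seq {set 'I_n}} :
  feasible s Os -> \sum_(k < size Os) wsum w (bin Os k) = wsum w setT.
Proof.
move=> [_ [Odisj [Ocov _]]]; rewrite wsum_bigcup => [|k hk]; last first.
  apply: bigcup_disjoint => j _; apply: Odisj => //.
  - exact: ltn_trans (ltn_ord j) hk.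
  - by move=> ekj; move: (ltn_ord j); rewrite -ekj ltnn.
congr wsum; apply/setP => i; rewrite inE.
by have [j hj hi] := Ocov i; apply/bigcupP; exists (Ordinal hj).
Qed.

Theorem proposition1 (R : realType) (n : nat) (s w : 'I_n -> R)
    (Os Bs : seq {set 'I_n}) (alpha : R) :
  (forall i, 0 < s i <= 1) ->
  (forall i, 0 < w i) ->
  optimal s w Os ->
  KB_output s w Bs ->
  1 <= alpha ->
  (forall k : nat, (1 <= k <= size Os)%N ->
     \sum_(j < Num.truncn (alpha * k%:R)) wsum w (bin Bs j)
       >= \sum_(j < k) wsum w (bin Os j)) ->
  cost w Bs <= alpha * cost w Os.
Proof.
move=> _ hw [Ofeas _] hKB ha hyp.
pose b j := wsum w (bin Bs j); pose o k := wsum w (bin Os k).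
pose f k := Num.truncn (alpha * k%:R).
have alpha_ge0 : 0 <= alpha by exact: le_trans ler01 ha.
have f_mono : {homo f : k1 k2 / (k1 <= k2)%N}.
  by move=> k1 k2 hk; apply/le_truncn/ler_wpM2l; rewrite ?ler_nat.
have f_le k : (f k)%:R <= alpha * k%:R by rewrite truncn_le mulr_ge0.
have total : \sum_(j < size Bs) wsum w (bin Bs j)
    <= \sum_(k < size Os) wsum w (bin Os k).
  by rewrite (feasible_total_weight w Ofeas); exact: KB_total_weight hw hKB.
have wsum_w_ge0 S : 0 <= wsum w S by exact: wsum_ge0.
apply: le_trans (rank_weighted_le b o (fun=> wsum_w_ge0 _) (fun=> wsum_w_ge0 _)
                   f_mono hyp total) _.
rewrite /cost mulr_sumr; apply: ler_sum => k _.
by rewrite /o mulrA ler_wpM2r ?wsum_w_ge0.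
Qed.
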